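(* Let $\mathbb{R}^p=E^q\oplus E^{p-q}$ be a decomposition with $\dim E^q=q\ge1$ such that the image of $E^q$ in the torus $\mathbb{R}^p/\mathbb{Z}^p$ is dense, and fix a scalar product on $E^q$. Let $A\in\mathrm{GL}_p(\mathbb{Z})$ preserve $E^q$ and $E^{p-q}$ and assume that $A|_{E^q}$ is a similarity for the given scalar product. Then $A$ is semi-simple (diagonalizable over $\mathbb{C}$). In particular, every element of a subgroup $U\subset\mathrm{GL}_p(\mathbb{Z})$ all of whose elements have these properties is semi-simple. *)

From HB Require Import structures.
From mathcomp Require Import all_boot all_order all_algebra all_field.
From mathcomp Require Import reals.
Set Implicit Arguments. Unset Strict Implicit. Unset Printing Implicit Defensive.
Import Order.TTheory GRing.Theory Num.Theory.
Local Open Scope ring_scope.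

(* Vectors of R^p are row vectors 'rV[R]_p; a matrix acts by v |-> v *m M.
   A subspace of R^p is the row space of a square matrix E : 'M[R]_p. *)

(* The image of the subspace E in the torus R^p / Z^p is dense, i.e.
   E + Z^p is dense in R^p (sup-norm on coordinates). *)
Definition dense_mod_Zp (R : realType) (p : nat) (E : 'M[R]_p) : Prop :=
  forall (x : 'rV[R]_p) (eps : R), 0 < eps ->
    exists (e : 'rV[R]_p) (z : 'rV[int]_p),
      (e <= E)%MS /\ forall i, `|x 0 i - e 0 i - (z 0 i)%:~R| < eps.

Definition scalar_product_on (R : realType) (p : nat) (E S : 'M[R]_p) : Prop :=
  S^T = S /\
  forall u : 'rV[R]_p, (u <= E)%MS -> u != 0 -> 0 < (u *m S *m u^T) 0 0.

(* The linear map M (which preserves E) restricted to E is a similarity for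
   the scalar product S: it multiplies the scalar product by a constant c > 0
   (c = lambda^2, lambda the similarity ratio). *)
Definition similarity_on (R : realType) (p : nat) (E S M : 'M[R]_p) : Prop :=
  exists2 c : R, 0 < c &
    forall u v : 'rV[R]_p, (u <= E)%MS -> (v <= E)%MS ->
      (u *m M *m S *m (v *m M)^T) 0 0 = c * (u *m S *m v^T) 0 0.

Definition GLZ (p : nat) (A : 'M[int]_p) : Prop := `|\det A| = 1.

From HB Require Import structures.
From mathcomp Require Import all_boot all_order all_algebra all_field.
From mathcomp Require Import reals.
From mathcomp Require Import ring lra.
Import Order.TTheory GRing.Theory Num.Theory.
Set Implicit Arguments. Unset Strict Implicit. Unset Printing Implicit Defensive.
Local Open Scope ring_scope.

(** Let B be the real matrix of A and c the ratio of the similarity. On E the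
  S-adjoint of B is c B^-1, which commutes with B, so every polynomial h(B)
  has a commuting S-adjoint on E; as S is definite on E, u h(B)^2 = 0 then
  forces u h(B) = 0 for u in E. For a rational polynomial g with g(A)^2 = 0 this
  says that E annihilates g(A); clearing denominators, a nonzero entry would
  give a nonzero integer vector orthogonal to E, which the density of E modulo
  Z^p forbids. Hence g(A)^2 = 0 implies g(A) = 0: the minimal polynomial of A
  is square-free, so separable in characteristic 0, and A is diagonalizable
  over the algebraic numbers. *)

Section AdjointOn.
Variables (K : fieldType) (n : nat) (E S : 'M[K]_n).

Definition adjoint_on (X Y : 'M[K]_n) :=
  forall x y : 'rV_n, (x <= E)%MS -> (y <= E)%MS ->
    x *m X *m S *m y^T = x *m S *m (y *m Y)^T.

Definition anisotropic_on :=
  forall w : 'rV_n, (w <= E)%MS -> w *m S *m w^T = 0 -> w = 0.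

Lemma adjoint_onD X1 Y1 X2 Y2 :
  adjoint_on X1 Y1 -> adjoint_on X2 Y2 -> adjoint_on (X1 + X2) (Y1 + Y2).
Proof.
move=> h1 h2 x y xE yE.
by rewrite mulmxDr !mulmxDl h1 // h2 // mulmxDr linearD mulmxDr.
Qed.

Lemma adjoint_on_scalar a : adjoint_on a%:M a%:M.
Proof.
move=> x y _ _.
by rewrite !mul_mx_scalar -scalemxAl linearZ -!scalemxAr -scalemxAl.
Qed.

Lemma adjoint_onM X1 Y1 X2 Y2 :
  stablemx E X1 -> stablemx E Y2 ->
  adjoint_on X1 Y1 -> adjoint_on X2 Y2 -> adjoint_on (X1 *m X2) (Y2 *m Y1).
Proof.
move=> sX1 sY2 h1 h2 x y xE yE.
have xX1 : (x *m X1 <= E)%MS by apply: submx_trans sX1; apply: submxMr.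
have yY2 : (y *m Y2 <= E)%MS by apply: submx_trans sY2; apply: submxMr.
by rewrite mulmxA h2 // h1 // mulmxA.
Qed.

Lemma stablemx_invmx B : B \in unitmx -> stablemx E B -> stablemx E (invmx B).
Proof.
move=> Bu sB.
have EB : (E <= E *m B)%MS.
  by rewrite -(mxrank_leqif_sup sB).2 mxrankMfree ?row_free_unit.
by have := submxMr (invmx B) EB; rewrite mulmxK.
Qed.

Lemma similarity_adjoint_on B c :
  B \in unitmx -> stablemx E B ->
  (forall u v : 'rV_n, (u <= E)%MS -> (v <= E)%MS ->
     (u *m B *m S *m (v *m B)^T) 0 0 = c * (u *m S *m v^T) 0 0) ->
  adjoint_on B (c *: invmx B).
Proof.
move=> Bu sB sim x y xE yE; apply/matrixP => i j; rewrite !ord1.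
have yBi : (y *m invmx B <= E)%MS.
  by apply: submx_trans (stablemx_invmx Bu sB); apply: submxMr.
rewrite -[in LHS](mulmxKV Bu y) sim // -scalemxAr linearZ /= -scalemxAr.
by rewrite [RHS]mxE.
Qed.

Hypothesis anisoS : anisotropic_on.

Lemma adjoint_on_sqr_eq0 H H' (u : 'rV_n) :
  stablemx E H -> stablemx E H' -> adjoint_on H H' -> comm_mx H H' ->
  (u <= E)%MS -> u *m H *m H = 0 -> u *m H = 0.
Proof.
move=> sH sH' adjH cHH' uE uHH.
set w := u *m H; pose v := w *m H'.
have wE : (w <= E)%MS by apply: submx_trans sH; apply: submxMr.
have vE : (v <= E)%MS by apply: submx_trans sH'; apply: submxMr.
have vH0 : v *m H = 0 by rewrite /v -mulmxA -cHH' mulmxA uHH mul0mx.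
have v0 : v = 0 by apply: anisoS => //; rewrite -(adjH v w) // vH0 !mul0mx.
by apply: anisoS => //; rewrite {1}/w (adjH u w) // -/v v0 trmx0 mulmx0.
Qed.

End AdjointOn.

Lemma adjoint_on_horner (K : fieldType) n (E S B B' : 'M[K]_n.+1) (h : {poly K}) :
  stablemx E B -> stablemx E B' -> adjoint_on E S B B' ->
  adjoint_on E S (horner_mx B h) (horner_mx B' h).
Proof.
move=> sB sB' adjB; elim/poly_ind: h => [|h c IH].
  by rewrite !rmorph0 => x y _ _; rewrite mulmx0 !mul0mx mulmx0 trmx0 mulmx0.
rewrite !rmorphD !rmorphM /= !horner_mx_X !horner_mx_C -!mulmxE.
apply: adjoint_onD; last exact: adjoint_on_scalar.
rewrite -(comm_mx_horner h (comm_mx_refl B')).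
by apply: adjoint_onM => //; exact: horner_mx_stable.
Qed.

Lemma similarity_horner_sqr_eq0 (K : fieldType) n (E S B : 'M[K]_n.+1) c h
    (u : 'rV_n.+1) :
  anisotropic_on E S -> B \in unitmx -> stablemx E B ->
  (forall u v : 'rV_n.+1, (u <= E)%MS -> (v <= E)%MS ->
     (u *m B *m S *m (v *m B)^T) 0 0 = c * (u *m S *m v^T) 0 0) ->
  (u <= E)%MS ->
  u *m horner_mx B h *m horner_mx B h = 0 -> u *m horner_mx B h = 0.
Proof.
move=> anisoS Bu sB sim; pose B' := c *: invmx B.
have sB' : stablemx E B'.
  by rewrite -scalemxAr scalemx_sub ?stablemx_invmx.
have cBB' : comm_mx B B'.
  by rewrite /comm_mx -scalemxAr -scalemxAl mulmxV // mulVmx.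
apply: (adjoint_on_sqr_eq0 anisoS (H' := horner_mx B' h)).
1,2: exact: horner_mx_stable.
- exact/adjoint_on_horner/similarity_adjoint_on.
- exact/comm_horner_mx/comm_mx_horner.
Qed.

Lemma half_le_norm_half_subz (R : realFieldType) (m : int) :
  1 / 2 <= `|1 / 2 - m%:~R : R|.
Proof.
have [m_le0 | m_gt0] := lerP m 0.
  have : m%:~R <= 0 :> R by rewrite lerz0.
  by move=> ?; rewrite ger0_norm; lra.
have : 1 <= m%:~R :> R by rewrite ler1z.
by move=> ?; rewrite ler0_norm; lra.
Qed.

Lemma common_denominator n (k : 'I_n -> rat) :
  exists2 D : int, D != 0 &
    exists z : 'I_n -> int, forall i, (z i)%:~R = D%:~R * k i.
Proof.
exists (\prod_l denq (k l)); first by apply/prodf_neq0 => l _; exact: denq_neq0.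
exists (fun i => numq (k i) * \prod_(l | l != i) denq (k l)) => i.
rewrite [in RHS](bigD1 i) //= !intrM -{3}(divq_num_den (k i)).
have : (denq (k i))%:~R != 0 :> rat by rewrite intr_eq0 denq_neq0.
by move=> ?; field.
Qed.

Section DenseModZp.
Variables (R : realType) (n : nat) (E : 'M[R]_n).
Hypothesis dense : dense_mod_Zp E.

Lemma dense_mod_Zp_int_orthogonal (z : 'I_n -> int) :
  (forall e : 'rV_n, (e <= E)%MS -> \sum_i e 0 i * (z i)%:~R = 0) ->
  forall i, z i = 0.
Proof.
move=> orth i0; apply/eqP/negP => /negP z0.
pose K : R := \sum_i `|(z i)%:~R : R|.
have K_ge0 : 0 <= K by apply: sumr_ge0 => i _; exact: normr_ge0.
have z0R : (z i0)%:~R != 0 :> R by rewrite intr_eq0.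
(* x pairs with z to 1/2, whereas E pairs with z to 0 and Z^p to integers. *)
pose x : 'rV[R]_n := \row_i (if i == i0 then ((z i0)%:~R)^-1 / 2 else 0).
pose eps : R := (2 * (K + 1))^-1.
have eps_gt0 : 0 < eps by rewrite invr_gt0; lra.
have epsK : eps * K < 1 / 2.
  have : eps * (2 * (K + 1)) = 1 by rewrite mulVf //; lra.
  lra.
have [e [y [eE close]]] := dense x eps_gt0.
have xz : \sum_i x 0 i * (z i)%:~R = 1 / 2.
  rewrite (bigD1 i0) //= big1 ?addr0 => [|i /negPf i_neq].
    by rewrite mxE eqxx mulrAC mulVf // mul1r.
  by rewrite mxE i_neq mul0r.
pose M : int := \sum_i y 0 i * z i.
have dev : \sum_i (x 0 i - e 0 i - (y 0 i)%:~R) * (z i)%:~R = 1 / 2 - M%:~R.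
  rewrite rmorph_sum /=; under eq_bigr => i _ do rewrite !mulrBl.
  rewrite !sumrB xz orth // subr0; congr (_ - _).
  by apply: eq_bigr => i _; rewrite intrM.
have small : `|1 / 2 - M%:~R| <= eps * K.
  rewrite -dev; apply: le_trans (ler_norm_sum _ _ _) _.
  rewrite /K mulr_sumr; apply: ler_sum => i _.
  by rewrite normrM ler_wpM2r ?normr_ge0 ?ltW.
by have := half_le_norm_half_subz R M; lra.
Qed.

Lemma dense_mod_Zp_rat_annihilator m (N : 'M[rat]_(n, m)) :
  (forall e : 'rV_n, (e <= E)%MS -> e *m map_mx ratr N = 0) -> N = 0.
Proof.
move=> orth; apply/matrixP => i j; rewrite mxE.
have [D D_neq0 [z Dz]] := common_denominator (fun i => N i j).
suff z0 : forall i, z i = 0.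
  apply/eqP; move: (Dz i); rewrite z0 => /esym/eqP.
  by rewrite mulf_eq0 intr_eq0 (negPf D_neq0).
apply: dense_mod_Zp_int_orthogonal => e eE.
have := congr1 (fun M : 'M[R]_(1, m) => M 0 j) (orth e eE); rewrite !mxE.
under eq_bigr => l _ do rewrite mxE.
move=> eN0; transitivity (ratr D%:~R * \sum_l e 0 l * ratr (N l j)).
  rewrite mulr_sumr; apply: eq_bigr => l _.
  by rewrite -ratr_int Dz rmorphM /= mulrCA.
by rewrite eN0 mulr0.
Qed.

End DenseModZp.

Lemma dense_similarity_horner_sqr_eq0 (R : realType) n (E S : 'M[R]_n.+1)
    (A : 'M[rat]_n.+1) c (g : {poly rat}) :
  dense_mod_Zp E -> anisotropic_on E S ->
  map_mx (ratr : rat -> R) A \in unitmx -> stablemx E (map_mx ratr A) ->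
  (forall u v : 'rV_n.+1, (u <= E)%MS -> (v <= E)%MS ->
     (u *m map_mx ratr A *m S *m (v *m map_mx ratr A)^T) 0 0
       = c * (u *m S *m v^T) 0 0) ->
  horner_mx A g *m horner_mx A g = 0 -> horner_mx A g = 0.
Proof.
move=> dense anisoS Au sA sim gA2; apply: (dense_mod_Zp_rat_annihilator dense).
move=> e eE; rewrite map_horner_mx.
apply: (similarity_horner_sqr_eq0 anisoS Au sA sim eE).
by rewrite -map_horner_mx -mulmxA -map_mxM gA2 map_mx0 mulmx0.
Qed.

Lemma mxminpoly_square_free (K : fieldType) n (A : 'M[K]_n.+1) :
  (forall g, horner_mx A g *m horner_mx A g = 0 -> horner_mx A g = 0) ->
  forall u : {poly K}, size u != 1 -> ~~ (u ^+ 2 %| mxminpoly A).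
Proof.
move=> sqr_eq0 u u_ne1; apply/negP => /dvdpP [k mAk].
have mA_neq0 : mxminpoly A != 0 by apply/monic_neq0/mxminpoly_monic.
have [k_neq0 u_neq0] : k != 0 /\ u != 0.
  by move: mA_neq0; rewrite mAk mulf_eq0 expf_eq0 /= negb_or => /andP[-> ->].
have u_gt1 : (1 < size u)%N.
  by rewrite ltn_neqAle eq_sym u_ne1 lt0n size_poly_eq0.
have /mxminpoly_min : horner_mx A (k * u) = 0.
  apply: sqr_eq0; rewrite mulmxE -rmorphM.
  have -> : k * u * (k * u) = k * mxminpoly A by rewrite mAk; ring.
  by rewrite rmorphM /= mx_root_minpoly mulr0.
move=> /(dvdp_leq (mulf_neq0 k_neq0 u_neq0)).
rewrite mAk expr2 mulrA size_mul ?mulf_neq0 //.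
by case: (size u) u_gt1 => [|[|s]] // _; rewrite !addnS ltnNge leq_addr.
Qed.

Lemma deriv_neq0_pchar0 (K : idomainType) (u : {poly K}) :
  [pchar K] =i pred0 -> (1 < size u)%N -> u^`() != 0.
Proof.
move=> /pcharf0P pchar0 u_gt1; apply/eqP.
move=> /(congr1 (fun p : {poly K} => p`_(size u).-2)).
rewrite coef_deriv coef0 => /eqP; rewrite -mulr_natr mulf_eq0 pchar0.
have -> : (size u).-2.+1 = (size u).-1 by case: (size u) u_gt1 => [|[|]].
rewrite -lead_coefE lead_coef_eq0 -size_poly_eq0.
by case: (size u) u_gt1 => [|[|]].
Qed.

Lemma separable_square_free_pchar0 (K : idomainType) (p : {poly K}) :
  [pchar K] =i pred0 ->
  (forall u : {poly K}, size u != 1 -> ~~ (u ^+ 2 %| p)) -> separable_poly p.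
Proof.
move=> pchar0 sq_free; apply/separable_polyP; split.
  exact/poly_square_freeP.
by move=> u _; exact: deriv_neq0_pchar0.
Qed.

Lemma diagonalizable_map_separable (K : fieldType) (L : closedFieldType)
    (f : {rmorphism K -> L}) n (A : 'M[K]_n.+1) :
  separable_poly (mxminpoly A) -> diagonalizable (map_mx f A).
Proof.
move=> sep; apply/diagonalizableP; rewrite mxminpoly_map.
have [rs mA] := closed_field_poly_normal (map_poly f (mxminpoly A)).
rewrite lead_coef_map (monicP (mxminpoly_monic A)) rmorph1 scale1r in mA.
exists rs; last by rewrite -mA.
by rewrite -separable_prod_XsubC -mA separable_map.
Qed.

Theorem mainTheorem14 (R : realType) (p q : nat) (E F : 'M[R]_p)
    (S : 'M[R]_p) (A : 'M[int]_p) :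
  (E + F :=: 1%:M)%MS -> (E :&: F = 0)%MS ->
  \rank E = q -> (1 <= q)%N ->
  dense_mod_Zp E ->
  scalar_product_on E S ->
  GLZ A ->
  (E *m map_mx intr A <= E)%MS -> (F *m map_mx intr A <= F)%MS ->
  similarity_on E S (map_mx intr A) ->
  diagonalizable (map_mx (intr : int -> algC) A).
Proof.
case: p E F S A => [|n] E F S A _ _ _ _ dense [_ Spos] detA sA _ [c _ sim].
  by rewrite (flatmx0 (map_mx _ A)); exact: diagonalizable0.
pose AQ := map_mx (intr : int -> rat) A.
have map_AQ (T : numFieldType) : map_mx (intr : int -> T) A = map_mx ratr AQ.
  by apply/matrixP => i j; rewrite !mxE ratr_int.
have anisoS : anisotropic_on E S.
  move=> w wE wSw0; apply/eqP/negP => /negP/(Spos w wE).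
  by rewrite wSw0 mxE ltxx.
have AR_unit : map_mx (ratr : rat -> R) AQ \in unitmx.
  rewrite -map_AQ unitmxE det_map_mx unitfE intr_eq0.
  by apply/eqP => detA0; move: detA; rewrite /GLZ detA0 normr0.
rewrite (map_AQ R) in sA sim; rewrite (map_AQ algC).
apply: diagonalizable_map_separable.
apply: separable_square_free_pchar0; first exact: pchar_num.
apply: mxminpoly_square_free => g.
exact: (dense_similarity_horner_sqr_eq0 dense anisoS AR_unit sA sim).
Qed.
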